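(* Let $\mathcal E=\{p_1,\dots,p_n\}\subseteq\mathbb K[x,y_1,\dots,y_n]$ be a set of $n$ polynomials, regarded as a vector. Let $\bar r_0\in\mathbb K^n$ be such that $\mathcal E(0,\bar r_0)=0$ and the matrix $(\nabla^{\eth}_{\bar y}\mathcal E)(0,\bar r_0,\bar r_0)\in\mathbb K^{n\times n}$ is invertible. Then there is a unique stream solution $\bar\sigma\in\Sigma^n$ of $\mathcal E$ with $\bar\sigma(0)=\bar r_0$. Moreover, $(\nabla^{\eth}_{\bar y}\mathcal E)(X,\bar r_0,\bar\sigma)$ is invertible in $\Sigma^{n\times n}$ and $\bar\sigma$ satisfies $$\bar\sigma'^{T}=-\big(\nabla^{\eth}_{\bar y}\mathcal E\big)(X,\bar r_0,\bar\sigma)^{-1}\cdot\Big(\frac{\eth\mathcal E}{\eth x}(X,\bar\sigma)\Big)^{T},\qquad \bar\sigma(0)=\bar r_0.$$ Furthermore, there exist polynomials $P_1,\dots,P_{n+1}\in\mathbb K[x,y_1,\dots,y_n,w]$ (with $w$ a new variable) and an initial value $c\in\mathbb K$, constructed from $\mathcal E$ and $\bar r_0$, such that the polynomial stream differential equation initial value problem $y_i'=P_i$, $y_i(0)=r_{0i}$ ($i=1,\dots,n$), $w'=P_{n+1}$, $w(0)=c$ has as unique solution $(\bar\sigma,\tau)$ for a suitable stream $\tau$.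
   Context: $\mathbb K$ is a field of characteristic $0$; streams $\Sigma=\mathbb K^\omega$ with pointwise sum, convolution product $(\sigma\times\tau)(i)=\sum_{j=0}^{i}\sigma(j)\tau(i-j)$, scalars identified with $(r,0,0,\dots)$, $X=(0,1,0,\dots)$, stream derivative $\sigma'(i)=\sigma(i+1)$. A stream solution of $\mathcal E$ is $\bar\sigma\in\Sigma^n$ with $p(X,\bar\sigma)=0$ for all $p\in\mathcal E$ ($x\mapsto X$, $y_i\mapsto\sigma_i$). A solution of a polynomial stream differential equation initial value problem $y_i'=P_i$, $y_i(0)=r_i$ is a tuple of streams $\bar\sigma$ with $\sigma_i'=P_i(X,\bar\sigma)$, $\sigma_i(0)=r_i$. Syntactic stream derivative of $p\in\mathbb K[x,\bar y]$: with new indeterminates $y_{0i},y_i'$, $y_0:=x$, $y_{00}:=0$, total order $y_0<y_1<\dots<y_n$, $\min(m)$ the least variable in monomial $m\ne1$: $(1)'=0$, $(x)'=1$, $(y_i)'=y_i'$, $(y_im)'=y_i'm+y_{0i}(m)'$ when $m\ne1$ and $y_i=\min(y_im)$, extended linearly. Writing uniquely $p'=q_0+\sum_{i=1}^nq_iy_i'$ with $q_j\in\mathbb K[x,\bar y_0,\bar y]$, set $\frac{\eth p}{\eth x}:=q_0$ (lies in $\mathbb K[x,\bar y]$) and $\frac{\eth p}{\eth y_i}:=q_i$. $\nabla^{\eth}_{\bar y}\mathcal E$ is the $n\times n$ polynomial matrix with entries $\frac{\eth p_i}{\eth y_j}$, and $\frac{\eth\mathcal E}{\eth x}=(\frac{\eth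 p_1}{\eth x},\dots,\frac{\eth p_n}{\eth x})$. $(\nabla^{\eth}_{\bar y}\mathcal E)(0,\bar r_0,\bar r_0)$ means evaluation at $x=0$, $\bar y_0=\bar r_0$, $\bar y=\bar r_0$; evaluation at $(X,\bar r_0,\bar\sigma)$ substitutes $x\mapsto X$, $y_{0i}\mapsto r_{0i}$, $y_i\mapsto\sigma_i$. *)

From HB Require Import structures.
From mathcomp Require Import all_boot all_order all_algebra.
From mathcomp Require Import boolp.
From mathcomp Require Import mpoly.

Set Implicit Arguments.
Unset Strict Implicit.
Unset Printing Implicit Defensive.

Import Order.TTheory GRing.Theory.
Local Open Scope ring_scope.

Section Streams.
Context (R : comNzRingType).

Definition stream := nat -> R.

HB.instance Definition _ := gen_eqMixin stream.
HB.instance Definition _ := gen_choiceMixin stream.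

Definition szero : stream := fun _ => 0.
Definition sopp (s : stream) : stream := fun i => - s i.
Definition sadd (s t : stream) : stream := fun i => s i + t i.

Lemma saddA : associative sadd.
Proof. by move=> s t u; apply/funext => i; rewrite /sadd addrA. Qed.
Lemma saddC : commutative sadd.
Proof. by move=> s t; apply/funext => i; rewrite /sadd addrC. Qed.
Lemma sadd0 : left_id szero sadd.
Proof. by move=> s; apply/funext => i; rewrite /sadd add0r. Qed.
Lemma saddN : left_inverse szero sopp sadd.
Proof. by move=> s; apply/funext => i; rewrite /sadd /sopp addNr. Qed.

HB.instance Definition _ := GRing.isZmodule.Build stream saddA saddC sadd0 saddN.

(* scalars r are identified with the stream (r, 0, 0, ...) *)
Definition sconst (r : R) : stream := fun i => if i is 0%N then r else 0.

Definition smul (s t : stream) : stream :=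
  fun i => \sum_(j < i.+1) s j * t (i - j)%N.

Definition sone : stream := sconst 1.

Local Definition pol (s : stream) (i : nat) : {poly R} := \poly_(j < i.+1) s j.

Local Lemma smulE s t i : smul s t i = (pol s i * pol t i)`_i.
Proof.
rewrite coefM; apply: eq_bigr => j _.
by rewrite !coef_poly ltn_ord ltnS leq_subr.
Qed.

Local Lemma coefM_eq (p q p' q' : {poly R}) i :
  (forall j, (j <= i)%N -> p`_j = q`_j) -> (forall j, (j <= i)%N -> p'`_j = q'`_j) ->
  (p * p')`_i = (q * q')`_i.
Proof.
move=> H H'; rewrite !coefM; apply: eq_bigr => j _.
by rewrite H ?H' ?leq_subr // -ltnS.
Qed.

Local Lemma pol_smul s t i j : (j <= i)%N ->
  (pol (smul s t) i)`_j = (pol s i * pol t i)`_j.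
Proof.
move=> Hj; rewrite coef_poly ltnS Hj smulE.
by apply: coefM_eq => k Hk; rewrite !coef_poly !ltnS Hk (leq_trans Hk Hj).
Qed.

Lemma smulA : associative smul.
Proof.
move=> s t u; apply/funext => i; rewrite !smulE.
transitivity ((pol s i * (pol t i * pol u i))`_i).
  by apply: coefM_eq => // j Hj; rewrite pol_smul.
by rewrite mulrA; apply: coefM_eq => // j Hj; rewrite pol_smul.
Qed.

Lemma smulC : commutative smul.
Proof. by move=> s t; apply/funext => i; rewrite !smulE mulrC. Qed.

Lemma smul1 : left_id sone smul.
Proof.
move=> s; apply/funext => i; rewrite smulE.
transitivity ((1 * pol s i)`_i); last by rewrite mul1r coef_poly ltnSn.
apply: coefM_eq => // j Hj; rewrite coef_poly ltnS Hj coef1.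
by case: j Hj.
Qed.

Lemma smulDl : left_distributive smul sadd.
Proof.
move=> s t u; apply/funext => i; rewrite /smul /sadd -big_split /=.
by apply: eq_bigr => j _; rewrite mulrDl.
Qed.

Lemma sone_neq0 : sone != szero.
Proof.
apply/eqP => /(congr1 (fun f => f 0%N)) /= /eqP.
by rewrite oner_eq0.
Qed.

HB.instance Definition _ :=
  GRing.Zmodule_isComNzRing.Build stream smulA smulC smul1 smulDl sone_neq0.

Definition sX : stream := fun i => if i == 1%N then 1 else 0.

Definition sderiv (s : stream) : stream := fun i => s i.+1.

End Streams.

(*  {mpoly K[n.+1]} : K[x, y_1..y_n]; variable ord0 is x, variable      *)
(*                    lift ord0 i is y_(i+1)   (i : 'I_n)                *)
(*  Poly0 K n       : K[x, y0_1..y0_n, y_1..y_n], represented as        *)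
(*                    {mpoly {mpoly K[n]}[n.+1]}: the inner variables   *)
(*                    are y0_1..y0_n, the outer ones x, y_1..y_n         *)
(*  DPoly K n       : K[x, y0_bar, y_bar, y'_1..y'_n], represented as   *)
(*                    {mpoly (Poly0 K n)[n]} with outer variables y'_i   *)
Section SyntacticDerivative.
Context (K : fieldType) (n : nat).

Definition Poly0 := {mpoly {mpoly K[n]}[n.+1]}.
Definition DPoly := {mpoly Poly0[n]}.

(* y_0 := x, and y_00 := 0 *)
Definition yv0 (i : 'I_n.+1) : DPoly :=
  match unlift ord0 i with
  | None => 0
  | Some j => ((('X_j : {mpoly K[n]})%:MP : Poly0)%:MP)
  end.

Definition yd (i : 'I_n.+1) : DPoly :=
  match unlift ord0 i with
  | None => 1
  | Some j => 'X_j
  end.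

Definition monD (m : 'X_{1..n.+1}) : DPoly := (('X_[m] : Poly0)%:MP).

Definition minvar (m : 'X_{1..n.+1}) : option 'I_n.+1 :=
  [pick i : 'I_n.+1 | (m i != 0%N) && [forall j : 'I_n.+1, (j < i)%N ==> (m j == 0%N)]].

(* syntactic stream derivative of a monomial; k is a fuel, k = mdeg m  *)
Fixpoint sder_mon (k : nat) (m : 'X_{1..n.+1}) : DPoly :=
  match k with
  | 0%N => 0
  | k'.+1 =>
    match minvar m with
    | None => 0
    | Some i =>
      let m1 := (m - U_(i))%MM in
      if m1 == 0%MM then yd i
      else yd i * monD m1 + yv0 i * sder_mon k' m1
    end
  end.

Definition sder (p : {mpoly K[n.+1]}) : DPoly :=
  \sum_(m <- msupp p)
     ((((p@_m)%:MP : {mpoly K[n]})%:MP : Poly0)%:MP) * sder_mon (mdeg m) m.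

(* writing p' = q_0 + sum_i q_i y_i' :                                  *)
(*   eth p / eth x  := q_0,   eth p / eth y_i := q_i                    *)
Definition eth_x (p : {mpoly K[n.+1]}) : Poly0 := (sder p)@_0%MM.
Definition eth_y (p : {mpoly K[n.+1]}) (i : 'I_n) : Poly0 := (sder p)@_U_(i).

End SyntacticDerivative.

Section Evaluation.
Context (K : fieldType).

Definition pt {k : nat} (x : K) (y : 'I_k -> K) : 'I_k.+1 -> K :=
  fun i => match unlift ord0 i with None => x | Some j => y j end.

Definition spt {k : nat} (s : 'I_k -> stream K) : 'I_k.+1 -> stream K :=
  fun i => match unlift ord0 i with None => sX K | Some j => s j end.

Definition seval {k : nat} (p : {mpoly K[k.+1]}) (s : 'I_k -> stream K) : stream K :=
  mmap (@sconst K) (spt s) p.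

Definition eval0 {n : nat} (q : Poly0 K n) (x : K) (r0 r : 'I_n -> K) : K :=
  meval (pt x r) (map_mpoly (meval r0) q).

Definition seval0 {n : nat} (q : Poly0 K n) (r0 : 'I_n -> K) (s : 'I_n -> stream K)
  : stream K :=
  seval (map_mpoly (meval r0) q) s.

Definition stream_solution {n : nat} (E : 'I_n -> {mpoly K[n.+1]})
  (s : 'I_n -> stream K) : Prop :=
  forall i, seval (E i) s = 0.

Definition psde_solution {k : nat} (P : 'I_k -> {mpoly K[k.+1]}) (r : 'I_k -> K)
  (s : 'I_k -> stream K) : Prop :=
  forall i, sderiv (s i) = seval (P i) s /\ s i 0%N = r i.

Definition ethJ0 {n : nat} (E : 'I_n -> {mpoly K[n.+1]}) (r0 : 'I_n -> K) : 'M[K]_n :=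
  \matrix_(i, j) eval0 (eth_y (E i) j) 0 r0 r0.

Definition ethJ {n : nat} (E : 'I_n -> {mpoly K[n.+1]}) (r0 : 'I_n -> K)
  (s : 'I_n -> stream K) : 'M[stream K]_n :=
  \matrix_(i, j) seval0 (eth_y (E i) j) r0 s.

Definition ethX {n : nat} (E : 'I_n -> {mpoly K[n.+1]}) (r0 : 'I_n -> K)
  (s : 'I_n -> stream K) : 'cV[stream K]_n :=
  \col_i seval0 (eth_x (E i)) r0 s.

Definition snoc {T : Type} {k : nat} (a : 'I_k -> T) (b : T) : 'I_k.+1 -> T :=
  fun i => match unlift ord_max i with Some j => a j | None => b end.

End Evaluation.

From HB Require Import structures.
From mathcomp Require Import all_boot all_order all_algebra.
From mathcomp Require Import boolp.
From mathcomp Require Import mpoly.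
From mathcomp Require Import ring.

(* 1. Streams form a commutative ring whose derivative obeys the product rule
      (s t)' = s' t + s(0) t'; a stream is determined by its head and its
      derivative.
   2. A stream differential system y' = F(y), y(0) = r whose right-hand side
      is causal (coefficients 0..j of F(y) only depend on coefficients 0..j
      of y) has exactly one solution, obtained by Picard iteration.
      Polynomial right-hand sides are causal; as a first application, every
      stream with invertible head is a unit.
   3. Chain rule: if s(0) = r0 then (p(X, s))' = ∂p/∂x(X, r0, s) +
      Σ_j ∂p/∂y_j(X, r0, s) s_j', the semantic content of the syntactic
      stream derivative.
   4. Hence s solves E iff J s'ᵀ + D = 0, where J = ∇E(X, r0, s) and
      D = ∂E/∂x(X, r0, s); with w = det(J)⁻¹, Cramer's rule turns this into
      s'ᵀ = - w adj(J) D.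
   5. Adding w as an unknown with w' = - c w (det J)', c = det(J(0))⁻¹, gives
      a polynomial system whose solutions from (r0, c) are exactly the pairs
      (s, det(J)⁻¹) with s a solution of E.  Steps 2 and 5 give the theorem. *)

Set Implicit Arguments.
Unset Strict Implicit.
Unset Printing Implicit Defensive.
Import GRing.Theory.
Local Open Scope ring_scope.

Section StreamCalculus.
Context (R : comNzRingType).
Implicit Types s t : stream R.

Lemma saddE s t i : (s + t) i = s i + t i. Proof. by []. Qed.
Lemma soppE s i : (- s) i = - s i. Proof. by []. Qed.
Lemma smul_coef s t i : (s * t) i = \sum_(j < i.+1) s j * t (i - j)%N.
Proof. by []. Qed.

Lemma smul_head s t : (s * t) 0%N = s 0%N * t 0%N.
Proof. by rewrite smul_coef big_ord1. Qed.

Lemma stream_eq s t : s 0%N = t 0%N -> sderiv s = sderiv t -> s = t.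
Proof.
move=> h0 hd; apply/funext => -[|i] //.
by have := congr1 (fun f => f i) hd.
Qed.

Lemma sconst_is_zmod_morphism : zmod_morphism (@sconst R).
Proof. by move=> a b; apply/funext => -[|i]; rewrite saddE soppE /sconst ?subr0. Qed.

Lemma sconst_is_monoid_morphism : monoid_morphism (@sconst R).
Proof.
split => // a b; apply/funext => -[|i]; rewrite smul_coef ?big_ord1 //.
rewrite big_ord_recl big1 ?addr0 ?mulr0 // => j _.
by rewrite /sconst /= mul0r.
Qed.

HB.instance Definition _ := GRing.isZmodMorphism.Build R (stream R) (@sconst R)
  sconst_is_zmod_morphism.
HB.instance Definition _ := GRing.isMonoidMorphism.Build R (stream R) (@sconst R)
  sconst_is_monoid_morphism.

Definition shead s : R := s 0%N.

Lemma shead_is_zmod_morphism : zmod_morphism shead.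
Proof. by []. Qed.
Lemma shead_is_monoid_morphism : monoid_morphism shead.
Proof. by split => // s t; apply: smul_head. Qed.

HB.instance Definition _ := GRing.isZmodMorphism.Build (stream R) R shead
  shead_is_zmod_morphism.
HB.instance Definition _ := GRing.isMonoidMorphism.Build (stream R) R shead
  shead_is_monoid_morphism.

Lemma sderivC (c : R) : sderiv (sconst c) = 0. Proof. by []. Qed.
Lemma sderiv1 : sderiv (1 : stream R) = 0. Proof. by []. Qed.
Lemma sderivX : sderiv (sX R) = 1. Proof. by apply/funext => -[|i]. Qed.

Lemma sderiv_sum I (r : seq I) (P : pred I) (F : I -> stream R) :
  sderiv (\sum_(j <- r | P j) F j) = \sum_(j <- r | P j) sderiv (F j).
Proof. by elim/big_rec2: _ => // j a b _ <-. Qed.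

Lemma sderivM s t : sderiv (s * t) = sderiv s * t + sconst (s 0%N) * sderiv t.
Proof.
apply/funext => i; rewrite /sderiv saddE !smul_coef big_ord_recl /= subn0 addrC.
congr (_ + _); rewrite big_ord_recl /= subn0 big1 ?addr0 // => j _.
by rewrite /sconst /= mul0r.
Qed.

Lemma sderivCM (c : R) s : sderiv (sconst c * s) = sconst c * sderiv s.
Proof. by rewrite sderivM sderivC mul0r add0r. Qed.

End StreamCalculus.

(* Over a field, if d(0) c = 1 then w is the inverse of d exactly when it
   solves w' = - c w d', w(0) = c; this makes inverses polynomially defined. *)
Lemma stream_inverse_ode (K : fieldType) (d w : stream K) (c : K) :
  d 0%N * c = 1 ->
  (w 0%N = c /\ sderiv w = - (sconst c * w * sderiv d)) <-> d * w = 1.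
Proof.
move=> hdc; have hcd : sconst (d 0%N) * sconst c = 1 by rewrite -rmorphM hdc rmorph1.
split => [[hw0 hw'] | hdw].
  apply: stream_eq; first by rewrite smul_head hw0 hdc.
  rewrite sderivM hw' sderiv1.
  by rewrite !mulrN !mulrA hcd mul1r mulrC subrr.
have hd0 : d 0%N * w 0%N = 1 by rewrite -smul_head hdw.
split; first by rewrite -[c]mulr1 -hd0 mulrA (mulrC c) hdc mul1r.
have hd' : sderiv d * w + sconst (d 0%N) * sderiv w = 0.
  by rewrite -sderivM hdw sderiv1.
have -> : sderiv w = sconst c * (sconst (d 0%N) * sderiv w).
  by rewrite mulrA (mulrC (sconst c)) hcd mul1r.
by rewrite -(addr0_eq hd'); ring.
Qed.

Section CausalODE.
Context (R : comNzRingType).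
Implicit Types s t : stream R.

Definition agree (j : nat) s t := forall l, (l <= j)%N -> s l = t l.

Lemma agree_trans j s t u : agree j s t -> agree j t u -> agree j s u.
Proof. by move=> h1 h2 l hl; rewrite h1 ?h2. Qed.
Lemma agree_le j j' s t : (j' <= j)%N -> agree j s t -> agree j' s t.
Proof. by move=> hj h l hl; apply: h; apply: leq_trans hl hj. Qed.
Lemma agreeD j s s' t t' : agree j s s' -> agree j t t' -> agree j (s + t) (s' + t').
Proof. by move=> h1 h2 l hl; rewrite !saddE h1 ?h2. Qed.
Lemma agreeN j s s' : agree j s s' -> agree j (- s) (- s').
Proof. by move=> h l hl; rewrite !soppE h. Qed.
Lemma agreeM j s s' t t' : agree j s s' -> agree j t t' -> agree j (s * t) (s' * t').
Proof.
move=> h1 h2 l hl; rewrite !smul_coef; apply: eq_bigr => i _.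
have hi : (i <= j)%N by rewrite (leq_trans _ hl) // -ltnS.
by rewrite h1 // h2 // (leq_trans (leq_subr _ _) hl).
Qed.
Lemma agreeX j s s' m : agree j s s' -> agree j (s ^+ m) (s' ^+ m).
Proof. by move=> h; elim: m => [|m ih]; rewrite ?expr0 // !exprS; apply: agreeM. Qed.

Section Picard.
Context (k : nat) (F : ('I_k -> stream R) -> 'I_k -> stream R) (r : 'I_k -> R).

Definition causal := forall j (a b : 'I_k -> stream R),
  (forall i, agree j (a i) (b i)) -> forall i, agree j (F a i) (F b i).

Definition ode_solution (s : 'I_k -> stream R) :=
  forall i, sderiv (s i) = F s i /\ s i 0%N = r i.

Hypothesis F_causal : causal.

Fixpoint picard (m : nat) : 'I_k -> stream R :=
  match m with
  | 0%N => fun i => sconst (r i)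
  | m'.+1 => fun i l => if l is l'.+1 then F (picard m') i l' else r i
  end.

Lemma picard_step m i : agree m (picard m.+1 i) (picard m i).
Proof.
elim: m i => [|m ih] i [|l] //= hl.
exact: (F_causal ih i hl).
Qed.

Lemma picard_stable m p : (m <= p)%N -> forall i, agree m (picard p i) (picard m i).
Proof.
elim: p => [|p ih]; first by rewrite leqn0 => /eqP -> i.
rewrite leq_eqVlt => /orP [/eqP -> //|hm] i; rewrite ltnS in hm.
exact: (agree_trans (agree_le hm (@picard_step p i)) (ih hm i)).
Qed.

Definition ode_sol : 'I_k -> stream R := fun i l => picard l i l.

Lemma ode_sol_picard m i : agree m (ode_sol i) (picard m i).
Proof. by move=> l hl; rewrite /ode_sol (picard_stable hl). Qed.

Lemma ode_exists : ode_solution ode_sol.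
Proof.
move=> i; split => //; apply/funext => l.
by rewrite /sderiv /ode_sol /= (F_causal (fun j => @ode_sol_picard l j) i (leqnn l)).
Qed.

Lemma ode_unique (s t : 'I_k -> stream R) : ode_solution s -> ode_solution t -> s = t.
Proof.
move=> hs ht.
suff h : forall m i, agree m (s i) (t i).
  by apply/funext => i; apply/funext => l; apply: (h l).
elim => [|m ih] i [|l] hl; rewrite ?(hs i).2 ?(ht i).2 //.
have := congr1 (fun f => f l) (hs i).1; rewrite /sderiv => ->.
have := congr1 (fun f => f l) (ht i).1; rewrite /sderiv => ->.
exact: F_causal.
Qed.

End Picard.
End CausalODE.

(* A stream with invertible head is a unit: its inverse solves the causal
   equation of stream_inverse_ode. *)
Lemma stream_unit (K : fieldType) (d : stream K) : d 0%N != 0 ->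
  exists w : stream K, d * w = 1.
Proof.
move=> hd; pose c := (d 0%N)^-1.
pose F (a : 'I_1 -> stream K) (i : 'I_1) := - (sconst c * a i * sderiv d).
have hF : causal F.
  by move=> j a b h i; apply/agreeN/agreeM => //; apply: agreeM.
have [hw' hw0] := ode_exists (fun=> c) hF ord0.
exists (ode_sol F (fun=> c) ord0); apply/(stream_inverse_ode _ (mulfV hd)).
exact: (conj hw0 hw').
Qed.

Section PolynomialEvaluation.
Context (K : fieldType) (k : nat).
Implicit Types (p q : {mpoly K[k.+1]}) (s t : 'I_k -> stream K).

Lemma sevalD p q s : seval (p + q) s = seval p s + seval q s.
Proof. by rewrite /seval rmorphD. Qed.
Lemma sevalN p s : seval (- p) s = - seval p s.
Proof. by rewrite /seval rmorphN. Qed.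
Lemma sevalB p q s : seval (p - q) s = seval p s - seval q s.
Proof. by rewrite /seval rmorphB. Qed.
Lemma sevalM p q s : seval (p * q) s = seval p s * seval q s.
Proof. by rewrite /seval rmorphM. Qed.
Lemma sevalC c s : seval c%:MP s = sconst c.
Proof. by rewrite /seval mmapC. Qed.
Lemma seval1 s : seval 1 s = 1.
Proof. by rewrite /seval rmorph1. Qed.
Lemma seval_sum I (r : seq I) (P : pred I) (F : I -> {mpoly K[k.+1]}) s :
  seval (\sum_(i <- r | P i) F i) s = \sum_(i <- r | P i) seval (F i) s.
Proof. by rewrite /seval rmorph_sum. Qed.
Lemma sevalX i s : seval 'X_i s = spt s i.
Proof. by rewrite /seval mmapX mmap1U. Qed.

Lemma seval_causal j p s t : (forall i, agree j (s i) (t i)) ->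
  agree j (seval p s) (seval p t).
Proof.
move=> h; apply: (big_ind2 (agree j)) => // [|m _]; first exact: agreeD.
apply: agreeM => //; apply: (big_ind2 (agree j)) => // [|i _]; first exact: agreeM.
by apply: agreeX; rewrite /spt; case: (unlift ord0 i) => // a; apply: h.
Qed.

Lemma seval_head p s : seval p s 0%N = meval (pt 0 (fun j => s j 0%N)) p.
Proof.
rewrite /seval /mmap mevalE -/(shead _) rmorph_sum; apply: eq_bigr => m _.
rewrite rmorphM /mmap1 rmorph_prod; congr (_ * _); apply: eq_bigr => i _.
by rewrite rmorphXn /shead /spt /pt; case: (unlift ord0 i).
Qed.

Lemma psde_causal (P : 'I_k -> {mpoly K[k.+1]}) :
  causal (fun s i => seval (P i) s).
Proof. by move=> j a b h i; apply: seval_causal. Qed.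

Definition psde_sol (P : 'I_k -> {mpoly K[k.+1]}) (r : 'I_k -> K) :=
  ode_sol (fun s i => seval (P i) s) r.

Lemma psde_solution_iff (P : 'I_k -> {mpoly K[k.+1]}) r s :
  psde_solution P r s <-> s = psde_sol P r.
Proof.
split => [hs|->]; last exact: ode_exists (psde_causal P).
by apply: (ode_unique (psde_causal P) hs); apply: ode_exists (psde_causal P).
Qed.

End PolynomialEvaluation.

Section AffineCoefficients.
Context (R : nzRingType) (n : nat) (a : R) (b : 'I_n -> R).

Lemma affine_coef0 : (a%:MP + \sum_j (b j)%:MP * 'X_j : {mpoly R[n]})@_0%MM = a.
Proof.
rewrite mcoeffD mcoeffC eqxx mulr1 raddf_sum /= big1 ?addr0 // => j _.
by rewrite mcoeffCM mcoeffX mnm1_eq0 mulr0.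
Qed.

Lemma affine_coefU i : (a%:MP + \sum_j (b j)%:MP * 'X_j : {mpoly R[n]})@_U_(i) = b i.
Proof.
rewrite mcoeffD mcoeffC mnm1_eq0 mulr0 add0r raddf_sum /=.
rewrite (bigD1 i) //= mcoeffCM mcoeffXU eqxx mulr1 big1 ?addr0 // => j hj.
by rewrite mcoeffCM mcoeffXU (negbTE hj) mulr0.
Qed.

End AffineCoefficients.

(* The chain rule: along streams s with s(0) = r0, the syntactic derivative
   evaluated at (X, r0, s, s') is the stream derivative of p(X, s). *)
Section ChainRule.
Context (K : fieldType) (n : nat) (r0 : 'I_n -> K) (s : 'I_n -> stream K).
Hypothesis s_head : forall j, s j 0%N = r0 j.

Definition eval_coef (c : Poly0 K n) : stream K := seval0 c r0 s.

Lemma eval_coef_is_zmod_morphism : zmod_morphism eval_coef.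
Proof. by move=> a b; rewrite /eval_coef /seval0 rmorphB sevalB. Qed.
Lemma eval_coef_is_monoid_morphism : monoid_morphism eval_coef.
Proof.
by split=> [|a b]; rewrite /eval_coef /seval0 ?rmorphM ?sevalM // rmorph1 seval1.
Qed.

HB.instance Definition _ := GRing.isZmodMorphism.Build (Poly0 K n) (stream K)
  eval_coef eval_coef_is_zmod_morphism.
HB.instance Definition _ := GRing.isMonoidMorphism.Build (Poly0 K n) (stream K)
  eval_coef eval_coef_is_monoid_morphism.

Definition eval_deriv (q : DPoly K n) : stream K :=
  mmap eval_coef (fun j => sderiv (s j)) q.

Lemma eval_derivD a b : eval_deriv (a + b) = eval_deriv a + eval_deriv b.
Proof. by rewrite /eval_deriv rmorphD. Qed.
Lemma eval_derivM a b : eval_deriv (a * b) = eval_deriv a * eval_deriv b.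
Proof. by rewrite /eval_deriv rmorphM. Qed.
Lemma eval_deriv_sum I (r : seq I) (P : pred I) (F : I -> DPoly K n) :
  eval_deriv (\sum_(i <- r | P i) F i) = \sum_(i <- r | P i) eval_deriv (F i).
Proof. by rewrite /eval_deriv rmorph_sum. Qed.
Lemma eval_derivC (c : Poly0 K n) : eval_deriv c%:MP = eval_coef c.
Proof. by rewrite /eval_deriv mmapC. Qed.

Lemma eval_deriv_scalar (c : K) :
  eval_deriv ((((c%:MP : {mpoly K[n]})%:MP : Poly0 K n)%:MP)) = sconst c.
Proof. by rewrite eval_derivC /eval_coef /seval0 map_mpolyC /= mevalC sevalC. Qed.

Lemma eval_deriv_monD m : eval_deriv (monD K m) = mmap1 (spt s) m.
Proof. by rewrite /monD eval_derivC /eval_coef /seval0 map_mpolyX /seval mmapX. Qed.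

Lemma eval_deriv_yd i : eval_deriv (yd K i) = sderiv (spt s i).
Proof.
rewrite /yd /spt; case: (unlift ord0 i) => [j|].
  by rewrite /eval_deriv mmapX mmap1U.
by rewrite /eval_deriv rmorph1 sderivX.
Qed.

Lemma eval_deriv_yv0 i : eval_deriv (yv0 K i) = sconst (spt s i 0%N).
Proof.
rewrite /yv0 /spt; case: (unlift ord0 i) => [j|].
  by rewrite eval_derivC /eval_coef /seval0 map_mpolyC /= mevalXU sevalC s_head.
by rewrite /eval_deriv !rmorph0.
Qed.

Lemma minvar_none (m : 'X_{1..n.+1}) : minvar m = None -> m = 0%MM.
Proof.
rewrite /minvar; case: pickP => // h _.
apply/mnmP => i; rewrite mnm0E.
elim/ltn_ind: (val i) {-2}i (erefl (val i)) => v ih i0 hv.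
have := h i0; rewrite /= => /negbT; rewrite negb_and negbK => /orP [/eqP //|].
move/forallPn => [j]; rewrite negb_imply => /andP [hj hmj].
by move: hmj; rewrite (ih (val j)) // -hv.
Qed.

Lemma eval_deriv_sder_mon k m : mdeg m = k ->
  eval_deriv (sder_mon K k m) = sderiv (mmap1 (spt s) m).
Proof.
elim: k m => [|k ih] m hm.
  have/eqP -> : (m == 0%MM) by rewrite -mdeg_eq0 hm.
  by rewrite /= mmap11 /eval_deriv rmorph0.
rewrite [sder_mon _ _ _]/=.
case e: (minvar m) => [i|]; last by move: hm; rewrite (minvar_none e) mdeg0.
have hi : (U_(i) <= m)%MM.
  move: e; rewrite /minvar; case: pickP => // i' /andP [hi' _] [<-].
  by rewrite lep1mP.
set m1 := (m - U_(i))%MM.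
have hm1 : m = (m1 + U_(i))%MM by rewrite submK.
have dm1 : mdeg m1 = k by move: hm; rewrite hm1 mdegD mdeg1 addn1 => -[].
have mm : mmap1 (spt s) m = mmap1 (spt s) m1 * spt s i.
  by rewrite hm1 commr_mmap1_M ?mmap1U // => j x; apply: mulrC.
case: ifP => [/eqP e1|_]; first by rewrite mm e1 mmap11 mul1r eval_deriv_yd.
(* unfolding eval_deriv at the two products only keeps the unification of
   the nested polynomial ring structures cheap *)
rewrite eval_derivD {1}/eval_deriv rmorphM [X in _ + X]/eval_deriv rmorphM.
change (eval_deriv (yd K i) * eval_deriv (monD K m1) +
  eval_deriv (yv0 K i) * eval_deriv (sder_mon K k m1) = sderiv (mmap1 (spt s) m)).
transitivity (sderiv (spt s i) * mmap1 (spt s) m1 +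
              sconst (spt s i 0%N) * sderiv (mmap1 (spt s) m1)).
  by congr (_ * _ + _ * _);
    [exact: eval_deriv_yd|exact: eval_deriv_monD|exact: eval_deriv_yv0|exact: ih].
by rewrite mm (mulrC (mmap1 _ _)) sderivM.
Qed.

Lemma eval_deriv_sder p : eval_deriv (sder p) = sderiv (seval p s).
Proof.
rewrite /sder eval_deriv_sum /seval /mmap sderiv_sum; apply: eq_bigr => m _.
by rewrite eval_derivM eval_deriv_scalar sderivCM eval_deriv_sder_mon.
Qed.

Definition affine_dy (q : DPoly K n) := exists (a : Poly0 K n) (b : 'I_n -> Poly0 K n),
  q = a%:MP + \sum_j (b j)%:MP * 'X_j.

Lemma affine_dy0 : affine_dy 0.
Proof.
exists 0, (fun _ => 0); rewrite ?raddf0 add0r big1 // => j _.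
by rewrite ?raddf0 mul0r.
Qed.

Lemma affine_dyD q1 q2 : affine_dy q1 -> affine_dy q2 -> affine_dy (q1 + q2).
Proof.
move=> [a1 [b1 ->]] [a2 [b2 ->]]; exists (a1 + a2), (fun j => b1 j + b2 j).
rewrite raddfD addrACA -big_split /=; congr (_ + _); apply: eq_bigr => j _.
by rewrite raddfD mulrDl.
Qed.

Lemma affine_dyCM (c : Poly0 K n) q : affine_dy q -> affine_dy (c%:MP * q).
Proof.
move=> [a [b ->]]; exists (c * a), (fun j => c * b j).
rewrite mulrDr mulr_sumr (mpolyCM n c a).
apply: f_equal2 (erefl _) _; apply: eq_bigr => j _.
by rewrite (mpolyCM n c (b j)) mulrA.
Qed.

Lemma affine_dy_yd i : affine_dy (yd K i).
Proof.
rewrite /yd; case: (unlift ord0 i) => [j|].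
  exists 0, (fun k => if k == j then 1 else 0).
  rewrite ?raddf0 add0r (bigD1 j) //= eqxx ?rmorph1 mul1r big1 ?addr0 // => k /negbTE ->.
  by rewrite ?raddf0 mul0r.
exists 1, (fun _ => 0); rewrite ?rmorph1 big1 ?addr0 // => j _.
by rewrite ?raddf0 mul0r.
Qed.

Lemma yv0_const i : exists c : Poly0 K n, yv0 K i = c%:MP.
Proof.
rewrite /yv0; case: (unlift ord0 i) => [j|]; first by eexists.
by exists 0; rewrite ?raddf0.
Qed.

(* the syntactic derivative is affine in y', which justifies eth_x, eth_y *)
Lemma affine_dy_sder p : affine_dy (sder p).
Proof.
have hmon k m : affine_dy (sder_mon K k m).
  elim: k m => [|k ih] m /=; first exact: affine_dy0.
  case: (minvar m) => [i|]; last exact: affine_dy0.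
  case: ifP => _; first exact: affine_dy_yd.
  apply: affine_dyD; first by rewrite /monD mulrC; apply/affine_dyCM/affine_dy_yd.
  by have [c ->] := yv0_const i; apply: affine_dyCM.
rewrite /sder; apply: (big_ind affine_dy); [exact: affine_dy0|exact: affine_dyD|].
by move=> m _; apply/affine_dyCM/hmon.
Qed.

Lemma chain_rule p :
  sderiv (seval p s) =
  seval0 (eth_x p) r0 s + \sum_j seval0 (eth_y p j) r0 s * sderiv (s j).
Proof.
rewrite -eval_deriv_sder /eth_x /eth_y.
have [a [b ->]] := affine_dy_sder p.
rewrite affine_coef0 eval_derivD eval_derivC eval_deriv_sum.
apply: f_equal2 (erefl _) _; apply: eq_bigr => j _.
by rewrite affine_coefU eval_derivM eval_derivC /eval_deriv mmapX mmap1U.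
Qed.

End ChainRule.

Lemma adj_solve (R : comNzRingType) (n : nat) (J : 'M[R]_n) (D v : 'cV[R]_n) (w : R) :
  \det J * w = 1 -> (D + J *m v = 0) <-> (v = - (w *: (\adj J *m D))).
Proof.
move=> hdw; split => h.
  have -> : v = w *: (\adj J *m (J *m v)).
    by rewrite mulmxA mul_adj_mx mul_scalar_mx scalerA mulrC hdw scale1r.
  by rewrite -(addr0_eq h) mulmxN scalerN.
rewrite h mulmxN -scalemxAr mulmxA mul_mx_adj mul_scalar_mx scalerA mulrC hdw.
by rewrite scale1r subrr.
Qed.

Lemma adj_inverse (R : comNzRingType) (n : nat) (J : 'M[R]_n) (w : R) :
  \det J * w = 1 -> J *m (w *: \adj J) = 1%:M /\ (w *: \adj J) *m J = 1%:M.
Proof.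
move=> hdw; rewrite -scalemxAr mul_mx_adj -scalemxAl mul_adj_mx.
by rewrite scale_scalar_mx mulrC hdw.
Qed.

Section Snoc.
Context (T : Type) (k : nat).

Lemma snoc_lift (a : 'I_k -> T) (b : T) (j : 'I_k) : snoc a b (lift ord_max j) = a j.
Proof. by rewrite /snoc liftK. Qed.

Lemma snoc_max (a : 'I_k -> T) (b : T) : snoc a b ord_max = b.
Proof. by rewrite /snoc unlift_none. Qed.

Lemma snoc_eta (f : 'I_k.+1 -> T) :
  f = snoc (fun j => f (lift ord_max j)) (f ord_max).
Proof. by apply/funext => i; rewrite /snoc; case: unliftP => [j ->|->]. Qed.

Lemma snoc_inj (a a' : 'I_k -> T) (b b' : T) :
  snoc a b = snoc a' b' -> a = a' /\ b = b'.
Proof.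
move=> e; split; last by rewrite -(snoc_max a b) e snoc_max.
by apply/funext => j; rewrite -(snoc_lift a b) e snoc_lift.
Qed.

End Snoc.

Lemma spt_snoc (K : fieldType) (k : nat) (s : 'I_k -> stream K) (w : stream K)
  (i : 'I_k.+1) : spt (snoc s w) (lift ord_max i) = spt s i.
Proof.
rewrite /spt; case: (unliftP ord0 i) => [j ->|->].
  have -> : lift ord_max (lift ord0 j) = lift ord0 (lift ord_max j) :> 'I_k.+2.
    by apply: val_inj; rewrite /= /bump /= add1n ltnS leqNgt ltn_ord.
  by rewrite !liftK snoc_lift.
have -> : lift ord_max ord0 = ord0 :> 'I_k.+2 by apply: val_inj.
by rewrite !unlift_none.
Qed.

Lemma spt_max (K : fieldType) (k : nat) (rho : 'I_k.+1 -> stream K) :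
  spt rho ord_max = rho ord_max.
Proof.
rewrite /spt; have -> : ord_max = lift ord0 (ord_max : 'I_k.+1) :> 'I_k.+2.
  by apply: val_inj.
by rewrite liftK.
Qed.

Lemma mmap_comp (R S : comNzRingType) (k1 k2 : nat)
  (g : {rmorphism {mpoly R[k2]} -> S}) (v : 'I_k1 -> {mpoly R[k2]}) (p : {mpoly R[k1]}) :
  g (mmap (@mpolyC k2 R) v p) = mmap (fun c => g c%:MP) (fun i => g (v i)) p.
Proof.
rewrite /mmap rmorph_sum; apply: eq_bigr => m _.
rewrite rmorphM /mmap1 rmorph_prod; congr (_ * _); apply: eq_bigr => i _.
by rewrite rmorphXn.
Qed.

Lemma mmap_ext (R S : nzRingType) (k : nat) (f1 f2 : R -> S) (h1 h2 : 'I_k -> S)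
  (p : {mpoly R[k]}) : f1 =1 f2 -> h1 =1 h2 -> mmap f1 h1 p = mmap f2 h2 p.
Proof.
move=> ef eh; rewrite /mmap; apply: eq_bigr => m _.
by rewrite ef (mmap1_eq _ eh).
Qed.

Section Lift.
Context (K : fieldType) (k : nat).

Definition liftp (p : {mpoly K[k.+1]}) : {mpoly K[k.+2]} :=
  mmap (@mpolyC k.+2 K) (fun i => 'X_(lift ord_max i)) p.

Lemma seval_lift p (s : 'I_k -> stream K) (w : stream K) :
  seval (liftp p) (snoc s w) = seval p s.
Proof.
rewrite /seval /liftp (mmap_comp (mmap (@sconst K) (spt (snoc s w)))).
apply: mmap_ext => [c|i] /=; first by rewrite mmapC.
by rewrite mmapX mmap1U spt_snoc.
Qed.

End Lift.

Section Construction.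
Context (K : fieldType) (n : nat) (E : 'I_n -> {mpoly K[n.+1]}) (r0 : 'I_n -> K).

Definition jacP : 'M[{mpoly K[n.+1]}]_n :=
  \matrix_(i, j) map_mpoly (meval r0) (eth_y (E i) j).
Definition dxP : 'cV[{mpoly K[n.+1]}]_n :=
  \col_i map_mpoly (meval r0) (eth_x (E i)).
Definition detP : {mpoly K[n.+1]} := \det jacP.

(* the partial derivatives of det ∇E, so that (det ∇E)' is polynomial *)
Definition detP_x : {mpoly K[n.+1]} := map_mpoly (meval r0) (eth_x detP).
Definition detP_y (j : 'I_n) : {mpoly K[n.+1]} := map_mpoly (meval r0) (eth_y detP j).

(* the initial value of w = (det ∇E)^-1 *)
Definition w0 : K := (\det (ethJ0 E r0))^-1.

Definition wvar : {mpoly K[n.+2]} := 'X_ord_max.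
Definition rhs_y (j : 'I_n) : {mpoly K[n.+2]} :=
  - (wvar * \sum_k liftp (\adj jacP j k) * liftp (dxP k ord0)).
Definition rhs_w : {mpoly K[n.+2]} :=
  - ((w0%:MP * wvar) * (liftp detP_x + \sum_j liftp (detP_y j) * rhs_y j)).
Definition system : 'I_n.+1 -> {mpoly K[n.+2]} := snoc rhs_y rhs_w.

Lemma ethJE s : ethJ E r0 s = map_mx (mmap (@sconst K) (spt s)) jacP.
Proof. by apply/matrixP => i j; rewrite !mxE. Qed.

Lemma ethXE s : ethX E r0 s = map_mx (mmap (@sconst K) (spt s)) dxP.
Proof. by apply/matrixP => i j; rewrite !mxE. Qed.

Lemma det_ethJ s : \det (ethJ E r0 s) = seval detP s.
Proof. by rewrite ethJE det_map_mx. Qed.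

Lemma seval_rhs_y s w j : seval (rhs_y j) (snoc s w) =
  (- (w *: (\adj (ethJ E r0 s) *m ethX E r0 s))) j ord0.
Proof.
rewrite /rhs_y sevalN sevalM /wvar sevalX spt_max snoc_max seval_sum !mxE.
congr (- (_ * _)); apply: eq_bigr => k _.
by rewrite sevalM !seval_lift ethJE -map_mx_adj ethXE !mxE.
Qed.

Lemma rhs_y_iff s w :
  (forall j, sderiv (s j) = seval (rhs_y j) (snoc s w)) <->
  \col_j sderiv (s j) = - (w *: (\adj (ethJ E r0 s) *m ethX E r0 s)).
Proof.
split => [h|h j]; last by rewrite seval_rhs_y -h mxE.
by apply/matrixP => j k; rewrite (ord1 k) mxE h seval_rhs_y.
Qed.

Lemma system_snoc s w :
  psde_solution system (snoc r0 w0) (snoc s w) <->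
  [/\ forall j, s j 0%N = r0 j,
      forall j, sderiv (s j) = seval (rhs_y j) (snoc s w),
      w 0%N = w0 & sderiv w = seval rhs_w (snoc s w)].
Proof.
split => [h | [hs hsy hw0 hw'] i].
  have [hw' hw0] := h ord_max; rewrite /system !snoc_max in hw' hw0.
  split => // j; have := h (lift ord_max j); rewrite /system !snoc_lift => -[] //.
by case: (unliftP ord_max i) => [j ->|->]; rewrite /system ?snoc_lift ?snoc_max.
Qed.

Section InitialValue.
Variable s : 'I_n -> stream K.
Hypothesis s_head : forall j, s j 0%N = r0 j.

Lemma ethJ_head : map_mx (@shead K) (ethJ E r0 s) = ethJ0 E r0.
Proof.
apply/matrixP => i j; rewrite !mxE /shead /seval0 seval_head /eval0.
by congr (meval (pt 0 _)); apply/funext => k; rewrite s_head.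
Qed.

Lemma detP_head : seval detP s 0%N = \det (ethJ0 E r0).
Proof. by rewrite -det_ethJ -/(shead _) -det_map_mx ethJ_head. Qed.

Lemma deriv_E i : sderiv (seval (E i) s) =
  (ethX E r0 s + ethJ E r0 s *m \col_j sderiv (s j)) i ord0.
Proof.
rewrite (chain_rule s_head) !mxE; congr (_ + _).
by apply: eq_bigr => j _; rewrite !mxE.
Qed.

Lemma seval_rhs_w w : (forall j, sderiv (s j) = seval (rhs_y j) (snoc s w)) ->
  seval rhs_w (snoc s w) = - (sconst w0 * w * sderiv (seval detP s)).
Proof.
move=> hsy; rewrite (chain_rule s_head) /rhs_w sevalN !sevalM sevalC /wvar sevalX.
rewrite spt_max snoc_max sevalD seval_lift.
rewrite (seval_sum _ _ (fun j => liftp (detP_y j) * rhs_y j)); congr (- (_ * (_ + _))).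
by apply: eq_bigr => j _; rewrite sevalM seval_lift -hsy.
Qed.

End InitialValue.

Hypothesis E_r0 : forall i, meval (pt 0 r0) (E i) = 0.
Hypothesis J0_unit : ethJ0 E r0 \in unitmx.

Lemma detP_head_w0 s : (forall j, s j 0%N = r0 j) -> seval detP s 0%N * w0 = 1.
Proof. by move=> hs; rewrite detP_head // mulfV // -unitfE -unitmxE. Qed.

Lemma solution_iff_linear s : (forall j, s j 0%N = r0 j) ->
  stream_solution E s <-> ethX E r0 s + ethJ E r0 s *m \col_j sderiv (s j) = 0.
Proof.
move=> hs; split => h.
  by apply/matrixP => i j; rewrite (ord1 j) -deriv_E // h mxE.
move=> i; apply: stream_eq; last by rewrite deriv_E // h mxE.
rewrite seval_head -[RHS](E_r0 i); congr (meval (pt 0 _)).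
by apply/funext => k; rewrite hs.
Qed.

Lemma solution_iff_cramer s w : (forall j, s j 0%N = r0 j) ->
  \det (ethJ E r0 s) * w = 1 ->
  stream_solution E s <->
  \col_j sderiv (s j) = - (w *: (\adj (ethJ E r0 s) *m ethX E r0 s)).
Proof. by move=> hs hdw; apply: iff_trans (solution_iff_linear hs) (adj_solve _ _ hdw). Qed.

Lemma system_iff s w :
  psde_solution system (snoc r0 w0) (snoc s w) <->
  [/\ forall j, s j 0%N = r0 j, stream_solution E s & \det (ethJ E r0 s) * w = 1].
Proof.
rewrite system_snoc; split => [[hs hsy hw0 hw'] | [hs hsol hdw]].
  have hdw : \det (ethJ E r0 s) * w = 1.
    rewrite det_ethJ; apply/(stream_inverse_ode _ (detP_head_w0 hs)).
    by rewrite -seval_rhs_w.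
  by split => //; apply/(solution_iff_cramer hs hdw)/rhs_y_iff.
have hsy := (rhs_y_iff s w).2 ((solution_iff_cramer hs hdw).1 hsol).
have := (stream_inverse_ode w (detP_head_w0 hs)).2.
rewrite -det_ethJ => /(_ hdw) [hw0 hw'].
by split => //; rewrite seval_rhs_w // -det_ethJ.
Qed.

End Construction.

Unset Implicit Arguments.

Theorem theorem3p7 (K : fieldType) (n : nat)
  (E : 'I_n -> {mpoly K[n.+1]}) (r0 : 'I_n -> K) :
  [pchar K] =i pred0 ->
  (forall i, meval (pt 0 r0) (E i) = 0) ->
  ethJ0 E r0 \in unitmx ->
  exists sigma : 'I_n -> stream K,
    [/\ (forall i, sigma i 0%N = r0 i) /\ stream_solution E sigma,
        (forall sigma' : 'I_n -> stream K,
           (forall i, sigma' i 0%N = r0 i) -> stream_solution E sigma' ->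
           sigma' = sigma),
        (exists N : 'M[stream K]_n,
           [/\ ethJ E r0 sigma *m N = 1%:M,
               N *m ethJ E r0 sigma = 1%:M &
               \col_i sderiv (sigma i) = - (N *m ethX E r0 sigma)])
      & exists (P : 'I_n.+1 -> {mpoly K[n.+2]}) (c : K) (tau : stream K),
          forall rho : 'I_n.+1 -> stream K,
            psde_solution P (snoc r0 c) rho <-> rho = snoc sigma tau].
Proof.
move=> _ E_r0 J0_unit.
pose rho := psde_sol (system E r0) (snoc r0 (w0 E r0)).
pose sigma : 'I_n -> stream K := fun j => rho (lift ord_max j).
pose tau := rho ord_max.
have rho_eq : rho = snoc sigma tau := snoc_eta rho.
have [sigma_head sigma_sol det_tau] :
    [/\ forall j, sigma j 0%N = r0 j, stream_solution E sigma
      & \det (ethJ E r0 sigma) * tau = 1].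
  by apply/(system_iff E_r0 J0_unit sigma tau); rewrite -rho_eq; apply/psde_solution_iff.
exists sigma; split => //.
- (* any other solution extends to a solution of the explicit system *)
  move=> s s_head s_sol.
  have [w det_w] : exists w : stream K, \det (ethJ E r0 s) * w = 1.
    by apply: stream_unit; rewrite det_ethJ detP_head // -unitfE -unitmxE.
  have e : snoc s w = snoc sigma tau.
    by rewrite -rho_eq; apply/psde_solution_iff/(system_iff E_r0 J0_unit s w).
  exact: (snoc_inj e).1.
- have [inv_l inv_r] := adj_inverse det_tau.
  exists (tau *: \adj (ethJ E r0 sigma)); split => //.
  by rewrite -scalemxAl; apply/(solution_iff_cramer E_r0 sigma_head det_tau).
- exists (system E r0), (w0 E r0), tau => rho'.
  by rewrite -rho_eq; apply: psde_solution_iff.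
Qed.
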